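(* Let $P=\sum_{k=0}^nq^kP_k(D)\in\mathbb{C}[q][D]$ with $P_k\in\mathbb{C}[D]$, where $D=q\frac{d}{dq}$. Fix $N\geq0$, let $R=\mathbb{C}[\varepsilon]/(\varepsilon^{N+1})$, and let $\{\overline{c}_i\}_{i\geq0}$ be a sequence of elements of $R$. Then $\{\overline{c}_i\}$ is a Newton solution of $P_\varepsilon$ if and only if the series $I=\sum_{i\geq0}\overline{c}_iq^i\in\mathbb{C}[[q]]\otimes R$ is a perturbed solution of $P$, where $\varepsilon$ plays the role of $h$.
   Context: Newton solution. Put $P_\varepsilon=\sum_kq^kP_k(D+\varepsilon)$. A sequence $\{\overline{c}_i\}_{i\geq 0}$ in $R$ is a Newton solution of $P_\varepsilon$ if for every $m\in\mathbb{Z}$ $$\overline{c}_mP_n(m+\varepsilon)+\overline{c}_{m+1}P_{n-1}(m+1+\varepsilon)+\cdots+\overline{c}_{m+n}P_0(m+n+\varepsilon)=0,$$ with $\overline{c}_i=0$ for $i<0$. Perturbed solution. Write $I=\sum_{j=0}^NI^j(q)\varepsilon^j$ with $I^j\in\mathbb{C}[[q]]$, and put $I_r=\sum_{m=0}^rI^{r-m}(q)\,t^m/m!\in\mathbb{C}[[q]][t]$. Here $P$ acts on $\mathbb{C}[[q]][t]$ via $D(f(q)t^m)=qf'(q)t^m+mf(q)t^{m-1}$, with $q$ acting by multiplication. Then $I$ is a perturbed solution of $P$ if $PI_r=0$ for all $0\leq r\leq N$. *)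

From HB Require Import structures.
From mathcomp Require Import all_boot all_order all_algebra.
From mathcomp Require Import reals complex.
Set Implicit Arguments. Unset Strict Implicit. Unset Printing Implicit Defensive.
Import Order.TTheory GRing.Theory Num.Theory.
Local Open Scope ring_scope.

(* ---------- The Artinian ring R_eps = F[eps]/(eps^(N+1)) ----------
   An element of R_eps is represented by any polynomial p : {poly F}
   (its class mod eps^(N+1)); the variable 'X plays the role of eps.
   Two representatives define the same element iff their truncations
   (take_poly N.+1) agree; in particular p = 0 in R_eps iff
   take_poly N.+1 p = 0.  Products/sums in R_eps are computed on
   representatives. *)

Definition ext0 (F : fieldType) (c : nat -> {poly F}) (i : int) : {poly F} :=
  match i with Posz k => c k | Negz _ => 0 end.

Definition eval_shift (F : fieldType) (p : {poly F}) (x : int) : {poly F} :=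
  p \Po ('X + (x%:~R)%:P).

Definition newton_solution (F : fieldType) (n N : nat) (Pk : nat -> {poly F})
    (c : nat -> {poly F}) : Prop :=
  forall m : int,
    take_poly N.+1
      (\sum_(j < n.+1) ext0 c (m + j%:Z) * eval_shift (Pk (n - j)%N) (m + j%:Z))
    = 0.

(* ---------- F[[q]][t] ----------
   An element is given by its coefficient array: F a m is the coefficient
   of q^a t^m (for each m, a -> F a m is a formal power series in q). *)
Definition qt_series (F : fieldType) := nat -> nat -> F.

Definition qmul (F : fieldType) (G : qt_series F) : qt_series F :=
  fun a m => if a is a'.+1 then G a' m else 0.

(* D (f(q) t^m) = q f'(q) t^m + m f(q) t^(m-1), extended linearly *)
Definition Dop (F : fieldType) (G : qt_series F) : qt_series F :=
  fun a m => a%:R * G a m + m.+1%:R * G a m.+1.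

Definition polyD_act (F : fieldType) (p : {poly F}) (G : qt_series F)
  : qt_series F :=
  fun a m => \sum_(i < size p) p`_i * iter i (@Dop F) G a m.

Definition P_act (F : fieldType) (n : nat) (Pk : nat -> {poly F})
    (G : qt_series F) : qt_series F :=
  fun a m => \sum_(k < n.+1) iter k (@qmul F) (polyD_act (Pk k) G) a m.

(* I = sum_i cbar_i q^i = sum_{j=0}^N I^j(q) eps^j, with
   I^j(q) = sum_i (coefficient of eps^j in cbar_i) q^i *)
Definition Icoef (F : fieldType) (c : nat -> {poly F}) (j : nat) : nat -> F :=
  fun a => (c a)`_j.

Definition I_r (F : fieldType) (c : nat -> {poly F}) (r : nat) : qt_series F :=
  fun a m => if (m <= r)%N then Icoef c (r - m) a / (m`!)%:R else 0.

Definition perturbed_solution (F : fieldType) (n N : nat) (Pk : nat -> {poly F})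
    (c : nat -> {poly F}) : Prop :=
  forall r : nat, (r <= N)%N -> P_act n Pk (I_r c r) = (fun _ _ => 0).

From HB Require Import structures.
From mathcomp Require Import all_boot all_order all_algebra zify.
From mathcomp Require Import reals complex.
From Stdlib Require Import FunctionalExtensionality.
Import Order.TTheory GRing.Theory Num.Theory.
Local Open Scope ring_scope.

(* Write [x_a] for the coefficient of [q^a] of a series with coefficients in
   [F[eps]], and let [taylor_qt r x] have [q^a t^m] coefficient
   [(eps^(r-m) coefficient of x_a) / m!], so that [I_r = taylor_qt r c].
   Matching [t^m/m!] with [eps^(r-m)], the operator [D = q d/dq + d/dt] becomes
   multiplication of [x_a] by [a + eps] and [q] becomes the shift [a -> a+1].
   Hence [P I_r = taylor_qt r d] where [d_b = sum_k P_k(b-k+eps) c_(b-k)] is the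
   [q^b] coefficient of [P_eps I].  Perturbed solution thus means that every
   [d_b] vanishes mod [eps^(N+1)], and the Newton equation at [m] is exactly
   this statement for [b = m + n] (it is empty when [m + n < 0]). *)

Lemma qt_seriesP (F : fieldType) (G H : qt_series F) :
  (forall a m, G a m = H a m) -> G = H.
Proof.
by move=> eqGH; do 2![apply: functional_extensionality => ?]; exact: eqGH.
Qed.

Lemma take_poly_eq0P (F : fieldType) (N : nat) (p : {poly F}) :
  take_poly N.+1 p = 0 <-> (forall j, (j <= N)%N -> p`_j = 0).
Proof.
split=> [p0 j le_jN | p0].
  by have := congr1 (fun q : {poly F} => q`_j) p0; rewrite coef_take_poly ltnS le_jN coef0.
apply/polyP => j; rewrite coef_take_poly coef0 ltnS; case: ifP => // le_jN.
exact: p0.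
Qed.

Section TaylorSeries.
Context {F : numFieldType}.

Definition taylor_qt (r : nat) (x : nat -> {poly F}) : qt_series F :=
  fun a m => if (m <= r)%N then (x a)`_(r - m) / (m`!)%:R else 0.

Lemma I_r_taylor (c : nat -> {poly F}) r : I_r c r = taylor_qt r c.
Proof. by []. Qed.

Lemma Dop_taylor r x :
  Dop (taylor_qt r x) = taylor_qt r (fun a => ('X + a%:R%:P) * x a).
Proof.
apply: qt_seriesP => a m; rewrite /Dop /taylor_qt.
case: (leqP m r) => [le_mr | lt_rm]; last by rewrite ltnNge ltnW //= !mulr0 addr0.
rewrite mulrDl coefD coefXM coefCM mulrDl addrC mulrA.
case: (ltngtP m r) => [lt_mr | lt_rm | ->]; last 2 first.
- by rewrite ltnNge le_mr in lt_rm.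
- by rewrite subnn /= mulr0 mul0r.
have -> : (r - m == 0)%N = false by rewrite subn_eq0 leqNgt lt_mr.
rewrite subnS factS natrM invfM; congr (_ + _).
by rewrite mulrCA [m.+1%:R * _]mulrA mulfV ?mul1r // pnatr_eq0.
Qed.

Lemma iter_Dop_taylor r x i :
  iter i (@Dop F) (taylor_qt r x) =
  taylor_qt r (fun a => ('X + a%:R%:P) ^+ i * x a).
Proof.
elim: i => [|i IHi]; first by apply: qt_seriesP => a m; rewrite /taylor_qt mul1r.
rewrite iterS IHi Dop_taylor.
by apply: qt_seriesP => a m; rewrite /taylor_qt exprS mulrA.
Qed.

Lemma sum_taylor (I : finType) r (f : I -> F) (x : I -> nat -> {poly F}) a m :
  \sum_i f i * taylor_qt r (x i) a m =
  taylor_qt r (fun a => \sum_i f i *: x i a) a m.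
Proof.
rewrite /taylor_qt; case: ifP => _; last by rewrite big1 // => i _; rewrite mulr0.
by rewrite coef_sum mulr_suml; apply: eq_bigr => i _; rewrite coefZ mulrA.
Qed.

Lemma polyD_act_taylor r x p :
  polyD_act p (taylor_qt r x) =
  taylor_qt r (fun a => (p \Po ('X + a%:R%:P)) * x a).
Proof.
apply: qt_seriesP => a m; rewrite /polyD_act.
under eq_bigr => i _ do rewrite iter_Dop_taylor.
rewrite sum_taylor /taylor_qt; case: ifP => // _.
by rewrite comp_polyE mulr_suml; under [in RHS]eq_bigr => i _ do rewrite -scalerAl.
Qed.

Lemma iter_qmul_taylor r x k :
  iter k (@qmul F) (taylor_qt r x) =
  taylor_qt r (fun a => if (k <= a)%N then x (a - k)%N else 0).
Proof.
elim: k => [|k IHk]; first by apply: qt_seriesP => a m; rewrite /taylor_qt subn0.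
rewrite iterS IHk; apply: qt_seriesP => [[|a]] m; rewrite /qmul /taylor_qt.
  by case: ifP => //; rewrite coef0 mul0r.
by rewrite ltnS subSS.
Qed.

End TaylorSeries.

Section NewtonVersusPerturbed.
Context {F : numFieldType}.
Variables (n N : nat) (Pk : nat -> {poly F}).
Variable c : nat -> {poly F}.

Definition Peps_coef (b : nat) : {poly F} :=
  \sum_(k < n.+1)
    (if (k <= b)%N then (Pk k \Po ('X + (b - k)%N%:R%:P)) * c (b - k)%N else 0).

Lemma P_act_I_r r : P_act n Pk (I_r c r) = taylor_qt r Peps_coef.
Proof.
apply: qt_seriesP => a m; rewrite I_r_taylor /P_act.
under eq_bigr => k _ do rewrite polyD_act_taylor iter_qmul_taylor -[taylor_qt _ _ _ _]mul1r.
rewrite sum_taylor /taylor_qt; case: ifP => // _.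
by under eq_bigr => k _ do rewrite scale1r.
Qed.

Lemma perturbed_solutionE : perturbed_solution n N Pk c <->
  (forall b j, (j <= N)%N -> (Peps_coef b)`_j = 0).
Proof.
split=> [sol b j le_jN | Peps0 r le_rN].
  have := sol j le_jN; rewrite P_act_I_r => /(congr1 (fun G => G b 0%N)).
  by rewrite /taylor_qt /= subn0 fact0 divr1.
rewrite P_act_I_r; apply: qt_seriesP => a m; rewrite /taylor_qt.
by case: ifP => // _; rewrite Peps0 ?mul0r // (leq_trans (leq_subr _ _) le_rN).
Qed.

Definition newton_sum (m : int) : {poly F} :=
  \sum_(j < n.+1) ext0 c (m + j%:Z) * eval_shift (Pk (n - j)) (m + j%:Z).

Lemma newton_sum_Peps_coef (b : nat) : newton_sum (b%:Z - n%:Z) = Peps_coef b.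
Proof.
rewrite /newton_sum (reindex_inj rev_ord_inj) /=; apply: eq_bigr => k _.
have le_kn : (k <= n)%N by rewrite -ltnS.
have -> : b%:Z - n%:Z + (n - k)%N%:Z = b%:Z - k%:Z by lia.
rewrite subSS subKn //; case: ifP => le_kb.
  by rewrite subzn // /ext0 /eval_shift mulrC.
have -> : b%:Z - k%:Z = Negz (k - b).-1.
  by rewrite NegzE prednK ?subn_gt0 ?ltnNge ?le_kb //; lia.
by rewrite /ext0 mul0r.
Qed.

Lemma newton_sum_neg (m : int) : m + n%:Z < 0 -> newton_sum m = 0.
Proof.
move=> mn_lt0; apply: big1 => j _.
have le_jn : (j <= n)%N by rewrite -ltnS.
have : m + j%:Z < 0 by lia.
by case: (m + j%:Z) => // k; rewrite /ext0 mul0r.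
Qed.

Lemma newton_solutionE : newton_solution n N Pk c <->
  (forall b j, (j <= N)%N -> (Peps_coef b)`_j = 0).
Proof.
split=> [sol b | Peps0 m].
  by apply/take_poly_eq0P; have := sol (b%:Z - n%:Z); rewrite -newton_sum_Peps_coef.
rewrite -/(newton_sum m); have [mn_lt0 | mn_ge0] := ltrP (m + n%:Z) 0.
  by rewrite newton_sum_neg //; apply/take_poly_eq0P => j _; rewrite coef0.
have -> : m = (absz (m + n%:Z))%:Z - n%:Z by rewrite gez0_abs // addrK.
by rewrite newton_sum_Peps_coef; apply/take_poly_eq0P; exact: Peps0.
Qed.

End NewtonVersusPerturbed.

Theorem proposition2p2p2 (R : realType) (n N : nat) (Pk : nat -> {poly R[i]})
    (c : nat -> {poly R[i]}) :
  newton_solution n N Pk c <-> perturbed_solution n N Pk c.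
Proof.
exact: iff_trans (newton_solutionE n N Pk c) (iff_sym (perturbed_solutionE n N Pk c)).
Qed.
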